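(* For every standard expression $e$ with $\varnothing\vdash e:\mathtt{bool}$, every principal $n$, every $P'\subseteq\mathsf{Privileges}$ and every stack $S$ (possibly empty list) such that $\langle n,P'\rangle::S$ is a stack, we have $[\![\varnothing\vdash e:\mathtt{bool}]\!]\,n\,P\,\{\}=[\![\varnothing\vdash e:\mathtt{bool}]\!]_s\,(\langle n,P'\rangle::S)\,\{\}$, where $P=\mathsf{privs}(\langle n,P'\rangle::S)$.
   Context: Fix sets $\mathsf{Principals}$ and $\mathsf{Privileges}$ and an access control list $\mathcal{A}:\mathsf{Principals}\to\mathcal{P}(\mathsf{Privileges})$. Language. Types: $t::=\mathtt{bool}\mid t_1\to t_2$. Expressions: $e::=\mathtt{true}\mid x\mid \mathtt{if}\ e\ \mathtt{then}\ e_1\ \mathtt{else}\ e_2\mid \lambda x.e\mid e_1\,e_2\mid \mathtt{letrec}\ f(x)=e_1\ \mathtt{in}\ e_2\mid \mathtt{signs}\ n\ e\mid \mathtt{dopriv}\ p\ \mathtt{in}\ e\mid \mathtt{check}\ p\ \mathtt{for}\ e\mid \mathtt{test}\ p\ \mathtt{then}\ e_1\ \mathtt{else}\ e_2$ ($n$ a principal, $p$ a privilege). Typing $D\vdash e:t$ is simply typed: $\mathtt{letrec}$ typed by $D,f:t_1\to t_2,x:t_1\vdash e_1:t_2$ and $D,f:t_1\to t_2\vdash e_2:t$; $\mathtt{signs},\mathtt{dopriv},\mathtt{check}$ preserve the body type; $\mathtt{test}$, $\mathtt{if}$ need branches of a common type ($\mathtt{if}$ a $\mathtt{bool}$ guard).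 An expression is standard if for every subexpression $\lambda x.e$ or $\mathtt{letrec}\ f(x)=e\ \mathtt{in}\ e_1$, the body $e$ is of the form $\mathtt{signs}\ n\ e'$. Common. $\bot,\star$ are two distinct values, neither booleans nor functions. For a cpo $C$, $C_{\bot\star}=C\cup\{\bot,\star\}$ with $u\le v$ iff $u=\bot$ or $u=v$ or $u,v\in C$, $u\le v$. ''let $d=E_1$ in $E_2$'' yields $E_1$ if $E_1\in\{\bot,\star\}$, else $E_2$ with $d:=E_1$; $\mathit{fix}$ is least fixed point; $\{\}$ is the empty environment. Eager semantics. $[\![\mathtt{bool}]\!]=\{\mathsf{true},\mathsf{false}\}$ and $\mathcal{P}(\mathsf{Privileges})$ ordered by equality; $[\![t_1\to t_2]\!]=\mathcal{P}(\mathsf{Privileges})\to[\![t_1]\!]\to[\![t_2]\!]_{\bot\star}$ (continuous, pointwise). $[\![D\vdash e:t]\!]\in\mathsf{Principals}\to\mathcal{P}(\mathsf{Privileges})\to[\![D]\!]\to[\![t]\!]_{\bot\star}$, written $[\![e]\!]nPh$. $P\sqcup_n\{p\}$ is $P\cup\{p\}$ if $p\in\mathcal{A}(n)$, else $P$. Equations: $[\![\mathtt{true}]\!]nPh=\mathsf{true}$; $[\![x]\!]nPh=h.x$; $[\![\mathtt{if}\ e\ \mathtt{then}\ e_1\ \mathtt{else}\ e_2]\!]nPh=$ let $b=[\![e]\!]nPh$ in (if $b$ then $[\![e_1]\!]nPh$ else $[\![e_2]\!]nPh$); $[\![\lambda x.e]\!]nPh=\lambda P'.\lambda d.[\![e]\!]nP'(h[x\mapsto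 d])$; $[\![e_1e_2]\!]nPh=$ let $f=[\![e_1]\!]nPh$ in let $d=[\![e_2]\!]nPh$ in $fPd$; $[\![\mathtt{letrec}\ f(x)=e_1\ \mathtt{in}\ e_2]\!]nPh=[\![e_2]\!]nP(h[f\mapsto\mathit{fix}\,G])$ with $G(g)=\lambda P'.\lambda d.[\![e_1]\!]nP'(h[f\mapsto g,x\mapsto d])$; $[\![\mathtt{signs}\ n'\ e]\!]nPh=[\![e]\!]n'(P\cap\mathcal{A}(n'))h$; $[\![\mathtt{dopriv}\ p\ \mathtt{in}\ e]\!]nPh=[\![e]\!]n(P\sqcup_n\{p\})h$; $[\![\mathtt{check}\ p\ \mathtt{for}\ e]\!]nPh=$ if $p\in P$ then $[\![e]\!]nPh$ else $\star$; $[\![\mathtt{test}\ p\ \mathtt{then}\ e_1\ \mathtt{else}\ e_2]\!]nPh=$ if $p\in P$ then $[\![e_1]\!]nPh$ else $[\![e_2]\!]nPh$. Stacks. $\mathsf{Stacks}$ is the set of nonempty lists of pairs $\langle n,P\rangle\in\mathsf{Principals}\times\mathcal{P}(\mathsf{Privileges})$, ordered by equality; $::$ is cons (head = top). $\mathsf{check}(p,\mathrm{nil})$ is false and $\mathsf{check}(p,\langle n,P\rangle::S)$ iff $p\in\mathcal{A}(n)\wedge(p\in P\vee\mathsf{check}(p,S))$. $\mathsf{privs}(S)=\{p:\mathsf{check}(p,S)\}$. Stack semantics. $[\![\mathtt{bool}]\!]_s=\{\mathsf{true},\mathsf{false}\}$, $[\![t_1\to t_2]\!]_s=\mathsf{Stacks}\to[\![t_1]\!]_s\to[\![t_2]\!]_{s,\bot\star}$;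 $[\![D\vdash e:t]\!]_s\in\mathsf{Stacks}\to[\![D]\!]_s\to[\![t]\!]_{s,\bot\star}$, written $[\![e]\!]_sSh$: $[\![\mathtt{true}]\!]_sSh=\mathsf{true}$; $[\![x]\!]_sSh=h.x$; $\mathtt{if}$: let $b=[\![e]\!]_sSh$ in (if $b$ then $[\![e_1]\!]_sSh$ else $[\![e_2]\!]_sSh$); $[\![\lambda x.e]\!]_sSh=\lambda S'.\lambda d.[\![e]\!]_sS'(h[x\mapsto d])$; $[\![e_1e_2]\!]_sSh=$ let $f=[\![e_1]\!]_sSh$ in let $d=[\![e_2]\!]_sSh$ in $fSd$; $[\![\mathtt{letrec}\ f(x)=e_1\ \mathtt{in}\ e_2]\!]_sSh=[\![e_2]\!]_sS(h[f\mapsto\mathit{fix}\,G])$ with $G(g)=\lambda S'.\lambda d.[\![e_1]\!]_sS'(h[f\mapsto g,x\mapsto d])$; $[\![\mathtt{signs}\ n'\ e]\!]_sSh=[\![e]\!]_s(\langle n',\varnothing\rangle::S)h$; $[\![\mathtt{dopriv}\ p\ \mathtt{in}\ e]\!]_s(\langle n,P\rangle::S)h=[\![e]\!]_s(\langle n,P\cup\{p\}\rangle::S)h$; $[\![\mathtt{check}\ p\ \mathtt{for}\ e]\!]_sSh=$ if $\mathsf{check}(p,S)$ then $[\![e]\!]_sSh$ else $\star$; $[\![\mathtt{test}\ p\ \mathtt{then}\ e_1\ \mathtt{else}\ e_2]\!]_sSh=$ if $\mathsf{check}(p,S)$ then $[\![e_1]\!]_sSh$ else $[\![e_2]\!]_sSh$.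 *)

From Stdlib Require Import List ClassicalEpsilon.

Set Implicit Arguments.

Definition pdec (Q : Prop) : {Q} + {~ Q} := excluded_middle_informative Q.

(* A term  tm D t  is an expression together with its typing derivation *)
(* D |- e : t ; variables are de Bruijn indices into D (head = most     *)
(* recently bound variable).                                            *)
Inductive ty : Type :=
| Tbool : ty
| Tarr : ty -> ty -> ty.

Inductive var : list ty -> ty -> Type :=
| Vz : forall G t, var (t :: G) t
| Vs : forall G t t', var G t -> var (t' :: G) t.

Section Language.
Variables (Principals Privileges : Type).

Inductive tm : list ty -> ty -> Type :=
| Etrue : forall G, tm G Tbool
| Evar : forall G t, var G t -> tm G t
| Eif : forall G t, tm G Tbool -> tm G t -> tm G t -> tm G t
| Elam : forall G t1 t2, tm (t1 :: G) t2 -> tm G (Tarr t1 t2)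
| Eapp : forall G t1 t2, tm G (Tarr t1 t2) -> tm G t1 -> tm G t2
(* letrec f(x) = e1 in e2 : e1 in context D, f:t1->t2, x:t1 ;
   e2 in context D, f:t1->t2 *)
| Eletrec : forall G t1 t2 t,
    tm (t1 :: Tarr t1 t2 :: G) t2 -> tm (Tarr t1 t2 :: G) t -> tm G t
| Esigns : forall G t, Principals -> tm G t -> tm G t
| Edopriv : forall G t, Privileges -> tm G t -> tm G t
| Echeck : forall G t, Privileges -> tm G t -> tm G t
| Etest : forall G t, Privileges -> tm G t -> tm G t -> tm G t.

Definition is_signs G t (e : tm G t) : Prop :=
  match e with Esigns _ _ => True | _ => False end.

Fixpoint standard G t (e : tm G t) : Prop :=
  match e with
  | Etrue _ => True
  | Evar _ => True
  | Eif c e1 e2 => standard c /\ standard e1 /\ standard e2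
  | Elam b => is_signs b /\ standard b
  | Eapp e1 e2 => standard e1 /\ standard e2
  | Eletrec e1 e2 => is_signs e1 /\ standard e1 /\ standard e2
  | Esigns _ b => standard b
  | Edopriv _ b => standard b
  | Echeck _ b => standard b
  | Etest _ e1 e2 => standard e1 /\ standard e2
  end.

End Language.

Inductive lift (X : Type) : Type :=
| Bot : lift X
| Star : lift X
| Val : X -> lift X.
Arguments Bot {X}.
Arguments Star {X}.

Definition blet X Y (m : lift X) (k : X -> lift Y) : lift Y :=
  match m with Bot => Bot | Star => Star | Val x => k x end.

(* [[bool]] = {true,false};  [[t1 -> t2]] = C -> [[t1]] -> [[t2]]_{bot,star}
   where C = P(Privileges) (eager) or Stacks (stack semantics). *)
Fixpoint dom (C : Type) (t : ty) : Type :=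
  match t with
  | Tbool => bool
  | Tarr t1 t2 => C -> dom C t1 -> lift (dom C t2)
  end.

(* Least upper bound of an (increasing) sequence in [[t]]_{bot,star},
   computed as in the cpo: bot if all elements are bot, otherwise the
   sequence is eventually constant equal to star / a boolean, or,
   at function type, the lub is the pointwise lub. *)
Definition pick X (u : nat -> lift X) : option nat :=
  match pdec (exists k, u k <> Bot) with
  | left H => Some (proj1_sig (constructive_indefinite_description _ H))
  | right _ => None
  end.

Fixpoint dlub (C : Type) (t : ty) : (nat -> lift (dom C t)) -> lift (dom C t) :=
  match t return (nat -> lift (dom C t)) -> lift (dom C t) with
  | Tbool => fun u => match pick u with None => Bot | Some k => u k end
  | Tarr t1 t2 => fun u =>
      match pick u with
      | None => Bot
      | Some k =>
          match u k with
          | Val _ =>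
              Val (fun (c : C) (d : dom C t1) =>
                     dlub C t2 (fun j => match u (k + j) with
                                         | Val f => f c d
                                         | _ => Bot
                                         end))
          | x => x
          end
      end
  end.

(* fix G = least fixed point = lub_k G^k(bottom) (Kleene),
   on [[t1 -> t2]] ordered pointwise. *)
Definition dfix (C : Type) (t1 t2 : ty)
  (G : dom C (Tarr t1 t2) -> dom C (Tarr t1 t2)) : dom C (Tarr t1 t2) :=
  fun c d => dlub C t2 (fun k => Nat.iter k G (fun _ _ => Bot) c d).

Fixpoint env (Dm : ty -> Type) (G : list ty) : Type :=
  match G with
  | nil => unit
  | t :: G' => (Dm t * env Dm G')%type
  end.

Fixpoint lookup (Dm : ty -> Type) G t (v : var G t) : env Dm G -> Dm t :=
  match v in var G t return env Dm G -> Dm t with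
  | Vz _ _ => fun h => fst h
  | Vs _ v' => fun h => lookup Dm v' (snd h)
  end.

Section Semantics.
Variables (Principals Privileges : Type).
Variable A : Principals -> Privileges -> Prop.   (* access control list *)

Definition pset := Privileges -> Prop.

Definition join_n (n : Principals) (P : pset) (p : Privileges) : pset :=
  if pdec (A n p) then (fun q => P q \/ q = p) else P.

Fixpoint esem G t (e : tm Principals Privileges G t)
  : Principals -> pset -> env (dom pset) G -> lift (dom pset t) :=
  match e in tm _ _ G t
        return Principals -> pset -> env (dom pset) G -> lift (dom pset t) with
  | @Etrue _ _ _ => fun n P h => Val true
  | @Evar _ _ _ _ v => fun n P h => Val (lookup (dom pset) v h)
  | @Eif _ _ _ _ c e1 e2 => fun n P h =>
      blet (esem c n P h) (fun b => if b then esem e1 n P h else esem e2 n P h)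
  | @Elam _ _ _ _ _ b => fun n P h => Val (fun P' d => esem b n P' (d, h))
  | @Eapp _ _ _ _ _ e1 e2 => fun n P h =>
      blet (esem e1 n P h) (fun f => blet (esem e2 n P h) (fun d => f P d))
  | @Eletrec _ _ _ _ _ _ e1 e2 => fun n P h =>
      esem e2 n P (dfix (fun g => fun P' d => esem e1 n P' (d, (g, h))), h)
  | @Esigns _ _ _ _ n' b => fun n P h => esem b n' (fun q => P q /\ A n' q) h
  | @Edopriv _ _ _ _ p b => fun n P h => esem b n (join_n n P p) h
  | @Echeck _ _ _ _ p b => fun n P h => if pdec (P p) then esem b n P h else Star
  | @Etest _ _ _ _ p e1 e2 => fun n P h =>
      if pdec (P p) then esem e1 n P h else esem e2 n P h
  end.

(* A stack is a nonempty list: its top frame and the rest. *)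
Definition frame := (Principals * pset)%type.
Definition Stack := (frame * list frame)%type.

Fixpoint check_list (p : Privileges) (S : list frame) : Prop :=
  match S with
  | nil => False
  | (n, P) :: S' => A n p /\ (P p \/ check_list p S')
  end.

Definition check (p : Privileges) (S : Stack) : Prop :=
  check_list p (fst S :: snd S).

Definition privs (S : Stack) : pset := fun p => check p S.

Fixpoint ssem G t (e : tm Principals Privileges G t)
  : Stack -> env (dom Stack) G -> lift (dom Stack t) :=
  match e in tm _ _ G t
        return Stack -> env (dom Stack) G -> lift (dom Stack t) with
  | @Etrue _ _ _ => fun S h => Val true
  | @Evar _ _ _ _ v => fun S h => Val (lookup (dom Stack) v h)
  | @Eif _ _ _ _ c e1 e2 => fun S h =>
      blet (ssem c S h) (fun b => if b then ssem e1 S h else ssem e2 S h)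
  | @Elam _ _ _ _ _ b => fun S h => Val (fun S' d => ssem b S' (d, h))
  | @Eapp _ _ _ _ _ e1 e2 => fun S h =>
      blet (ssem e1 S h) (fun f => blet (ssem e2 S h) (fun d => f S d))
  | @Eletrec _ _ _ _ _ _ e1 e2 => fun S h =>
      ssem e2 S (dfix (fun g => fun S' d => ssem e1 S' (d, (g, h))), h)
  | @Esigns _ _ _ _ n' b => fun S h =>
      ssem b ((n', (fun _ => False) : pset), fst S :: snd S) h
  | @Edopriv _ _ _ _ p b => fun S h =>
      match S with
      | ((n, P), rest) => ssem b ((n, (fun q => P q \/ q = p) : pset), rest) h
      end
  | @Echeck _ _ _ _ p b => fun S h => if pdec (check p S) then ssem b S h else Star
  | @Etest _ _ _ _ p e1 e2 => fun S h =>
      if pdec (check p S) then ssem e1 S h else ssem e2 S h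
  end.

End Semantics.

(* The two semantics are related by a logical relation: at [bool] values are
   equal, and an eager function [f] is related to a stack function [g] when
   [f (privs S)] and [g S] map related arguments to related results, for every
   stack [S].  The fundamental lemma holds for every standard expression
   evaluated with the principal on top of the stack, since [privs] turns a
   [signs] push into an intersection with the ACL and a [dopriv] into the
   join [P ⊔_n {p}].  Standardness is needed for function bodies: they start
   with [signs], so their eager meaning does not depend on the principal of
   the definition site, which may differ from the top of the caller's stack. *)

From Stdlib Require Import List FunctionalExtensionality PropExtensionality.

Lemma pset_ext (Privileges : Type) (P Q : pset Privileges) :
  (forall q, P q <-> Q q) -> P = Q.
Proof.
  intros H; apply functional_extensionality; intros q.
  apply propositional_extensionality; auto.
Qed.

Lemma pick_ext X Y (u : nat -> lift X) (v : nat -> lift Y) :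
  (forall k, u k = Bot <-> v k = Bot) -> pick u = pick v.
Proof.
  intros H.
  assert (E : (fun k => u k <> Bot) = (fun k => v k <> Bot)).
  { apply functional_extensionality; intros k.
    apply propositional_extensionality; rewrite (H k); reflexivity. }
  unfold pick; rewrite E; reflexivity.
Qed.
Arguments pick_ext {X Y}.

Definition Rlift X Y (Rr : X -> Y -> Prop) (x : lift X) (y : lift Y) : Prop :=
  match x, y with
  | Bot, Bot | Star, Star => True
  | Val a, Val b => Rr a b
  | _, _ => False
  end.
Arguments Rlift {X Y}.

Lemma Rlift_Bot X Y (Rr : X -> Y -> Prop) x y :
  Rlift Rr x y -> (x = Bot <-> y = Bot).
Proof. destruct x, y; simpl; intuition discriminate. Qed.
Arguments Rlift_Bot {X Y Rr x y}.

Lemma Rlift_eq X (x y : lift X) : Rlift eq x y -> x = y.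
Proof. destruct x, y; simpl; intros H; try contradiction; congruence. Qed.

Lemma Rlift_blet X Y X' Y' (Ra : X -> Y -> Prop) (Rb : X' -> Y' -> Prop)
  (x : lift X) (y : lift Y) (k : X -> lift X') (k' : Y -> lift Y') :
  Rlift Ra x y -> (forall a b, Ra a b -> Rlift Rb (k a) (k' b)) ->
  Rlift Rb (blet x k) (blet y k').
Proof. destruct x, y; simpl; intros H1 H2; try contradiction; auto. Qed.
Arguments Rlift_blet {X Y X' Y'}.

Section Correspondence.
Variables (Principals Privileges : Type).
Variable A : Principals -> Privileges -> Prop.

Notation PS := (pset Privileges).
Notation ST := (Stack Principals Privileges).

Lemma privs_signs (n' : Principals) (S : ST) :
  (fun q => privs A S q /\ A n' q) = privs A ((n', fun _ => False), fst S :: snd S).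
Proof. apply pset_ext; intros q; unfold privs, check; simpl; tauto. Qed.

Lemma privs_dopriv (n : Principals) (P : PS) (rest : list (frame Principals Privileges))
  (p : Privileges) :
  join_n A n (privs A ((n, P), rest)) p = privs A ((n, fun q => P q \/ q = p), rest).
Proof.
  unfold join_n; destruct (pdec (A n p)) as [Hp|Hp];
    apply pset_ext; intros q; unfold privs, check; simpl.
  - split; [intros [[Ha [H|H]]|H]; subst; tauto | intros [Ha [[H|H]|H]]; subst; tauto].
  - split; [intros [Ha [H|H]]; tauto | intros [Ha [[H|H]|H]]; subst; tauto].
Qed.

Lemma esem_signs_principal_irrelevant {G t} {b : tm Principals Privileges G t} :
  is_signs b -> forall n1 n2 P h, esem A b n1 P h = esem A b n2 P h.
Proof. destruct b; simpl; intros; try contradiction; reflexivity. Qed.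

Fixpoint R (t : ty) : dom PS t -> dom ST t -> Prop :=
  match t return dom PS t -> dom ST t -> Prop with
  | Tbool => eq
  | Tarr t1 t2 => fun f g => forall (S : ST) d d', R t1 d d' ->
      Rlift (R t2) (f (privs A S) d) (g S d')
  end.

Fixpoint Renv (G : list ty) : env (dom PS) G -> env (dom ST) G -> Prop :=
  match G return env (dom PS) G -> env (dom ST) G -> Prop with
  | nil => fun _ _ => True
  | t :: G' => fun h h' => R t (fst h) (fst h') /\ Renv G' (snd h) (snd h')
  end.

Lemma lookup_R G t (v : var G t) h h' :
  Renv G h h' -> R t (lookup (dom PS) v h) (lookup (dom ST) v h').
Proof. induction v; simpl; intros [Hfst Hsnd]; auto. Qed.

Lemma dlub_R t (u : nat -> lift (dom PS t)) (v : nat -> lift (dom ST t)) :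
  (forall k, Rlift (R t) (u k) (v k)) -> Rlift (R t) (dlub PS t u) (dlub ST t v).
Proof.
  revert u v; induction t as [|t1 _ t2 IH2]; intros u v H; cbn [dlub];
    rewrite (pick_ext u v) by (intros k; exact (Rlift_Bot (H k)));
    destruct (pick v) as [k|]; try exact I.
  - apply H.
  - pose proof (H k) as Hk.
    destruct (u k), (v k); simpl in Hk; try contradiction; try exact I.
    intros S x x' Hx; apply IH2; intros j.
    specialize (H (k + j)).
    destruct (u (k + j)), (v (k + j)); simpl in H; try contradiction; try exact I.
    apply H, Hx.
Qed.

Lemma dfix_R t1 t2 (F : dom PS (Tarr t1 t2) -> dom PS (Tarr t1 t2))
  (F' : dom ST (Tarr t1 t2) -> dom ST (Tarr t1 t2)) :
  (forall g g', R (Tarr t1 t2) g g' -> R (Tarr t1 t2) (F g) (F' g')) ->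
  R (Tarr t1 t2) (dfix F) (dfix F').
Proof.
  intros HF S d d' Hd; apply dlub_R; intros k; revert S d d' Hd.
  change (R (Tarr t1 t2) (Nat.iter k F (fun _ _ => Bot))
                         (Nat.iter k F' (fun _ _ => Bot))).
  induction k as [|k IHk]; simpl; [intros; exact I | apply HF, IHk].
Qed.

Lemma esem_ssem_R G t (e : tm Principals Privileges G t) :
  standard e -> forall (S : ST) h h', Renv G h h' ->
  Rlift (R t) (esem A e (fst (fst S)) (privs A S) h) (ssem A e S h').
Proof.
  induction e; cbn [esem ssem standard]; intros Hs S h h' Hh.
  - reflexivity.
  - apply lookup_R, Hh.
  - destruct Hs as (Hs1 & Hs2 & Hs3).
    apply (Rlift_blet (R Tbool)); [apply IHe1; auto|].
    simpl; intros a b <-; destruct a; auto.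
  - destruct Hs as (Hsg & Hsb); intros S' d d' Hd.
    rewrite (esem_signs_principal_irrelevant Hsg _ (fst (fst S'))).
    apply IHe; simpl; auto.
  - destruct Hs as (Hs1 & Hs2).
    apply (Rlift_blet (R (Tarr t1 t2))); [apply IHe1; auto|].
    intros f g Hf; apply (Rlift_blet (R t1)); [apply IHe2; auto|].
    intros d d' Hd; apply Hf, Hd.
  - destruct Hs as (Hsg & Hs1 & Hs2).
    apply IHe2; auto; split; auto.
    apply dfix_R; intros g g' Hg S' d d' Hd.
    rewrite (esem_signs_principal_irrelevant Hsg _ (fst (fst S'))).
    apply IHe1; simpl; auto.
  - rewrite privs_signs; exact (IHe Hs ((p, _), _) h h' Hh).
  - destruct S as [[n P] rest]; simpl.
    rewrite privs_dopriv; exact (IHe Hs ((n, _), rest) h h' Hh).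
  - change (privs A S p) with (check A p S).
    destruct (pdec (check A p S)); [apply IHe; auto | exact I].
  - destruct Hs as (Hs1 & Hs2).
    change (privs A S p) with (check A p S).
    destruct (pdec (check A p S)); [apply IHe1 | apply IHe2]; auto.
Qed.

End Correspondence.

Theorem theorem5 (Principals Privileges : Type)
  (A : Principals -> Privileges -> Prop)
  (e : tm Principals Privileges nil Tbool) (He : standard e)
  (n : Principals) (P' : Privileges -> Prop)
  (S : list (Principals * (Privileges -> Prop))) :
  esem A e n (privs A ((n, P'), S)) tt = ssem A e ((n, P'), S) tt.
Proof.
  apply Rlift_eq.
  exact (@esem_ssem_R _ _ A _ _ e He ((n, P'), S) tt tt I).
Qed.
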